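(* Let $C_n(a,b)$ be a connected $2$-regular circulant digraph, let $l\ge1$, $0\le k\le l$ with $la+k(b-a)=\omega n$ for an integer $\omega$, and let $w\in\mathbb{W}_2(l,k)$ with $w=x^r$ where $r$ is the repetition number of $w$. Then for any vertex $v$, the periodic orbit $p=\varphi(w,v)$ is primitive if and only if $\gcd(r,\omega)=1$. More generally, if $p=q^t$ for some periodic orbit $q$ and positive integer $t$, then $q$ is primitive if and only if $t=\gcd(r,\omega)$.
   Context: Let $n\ge 2$ and $0<a<b<n$ be integers with $\gcd(n,a,b)=1$. $C_n(a,b)$ has vertex set $\mathbb{Z}_n$ and directed bonds $(v,v+a)$, $(v,v+b)$ (addition mod $n$), with step sizes $a$, $b$. A path of length $l$ is a sequence of bonds $(e_1,\dots,e_l)$ with the terminus of $e_j$ equal to the origin of $e_{j+1}$; its $b$-count is the number of bonds of step size $b$; its step sequence is the sequence of step sizes; a circuit is a path whose last terminus equals its first origin. A periodic orbit is an equivalence class of circuits under cyclic rotation $(e_1,\dots,e_l)\mapsto(e_2,\dots,e_l,e_1)$. For a circuit $c$, $c^t$ is the concatenation of $t$ copies, and for an orbit $q=[c]$, $q^t=[c^t]$. An orbit is primitive if it is not $[c_0^r]$ for a circuit $c_0$ and $r>1$. $\mathbb{W}_2(l,k)$ is the set of words over $\{a,b\}$ of length $l$ with exactly $k$ letters $b$; the repetition number of a word $w$ is the largest $r$ with $w=x^r$ for some word $x$ (then $x$ is primitive, i.e., not a proper power). Identifying letters $a,b$ with step sizes $a,b$, $\psi(w,v)$ is the unique path starting at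 vertex $v$ with step sequence $w$; when it is a circuit, $\varphi(w,v)=[\psi(w,v)]$. *)

From mathcomp Require Import all_boot all_order all_algebra.
Set Implicit Arguments. Unset Strict Implicit. Unset Printing Implicit Defensive.

(* Circulant digraph C_n(a,b): vertices are the naturals v < n (= Z_n),
   a bond is a pair (origin, letter) where letter false = step a, true = step b.
   Since a <> b (mod n), a bond (v, v+a) / (v, v+b) is determined by its origin
   and its step size. *)
Definition bond := (nat * bool)%type.

Definition step (a b : nat) (s : bool) : nat := if s then b else a.

Definition origin (e : bond) : nat := e.1.
Definition terminus (n a b : nat) (e : bond) : nat := (e.1 + step a b e.2) %% n.

Definition is_bond (n : nat) (e : bond) : bool := e.1 < n.

Definition consec (n a b : nat) (e f : bond) : bool := terminus n a b e == origin f.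

Definition is_circuit (n a b : nat) (c : seq bond) : bool :=
  [&& c != [::], all (is_bond n) c & cycle (consec n a b) c].

Definition cpower (c : seq bond) (t : nat) : seq bond := flatten (nseq t c).

Definition same_orbit (c d : seq bond) : Prop := exists i, d = rot i c.

Definition primitive_orbit (n a b : nat) (c : seq bond) : Prop :=
  ~ exists (c0 : seq bond) (r : nat),
      [/\ is_circuit n a b c0, 1 < r & same_orbit (cpower c0 r) c].

Definition wpower (x : seq bool) (r : nat) : seq bool := flatten (nseq r x).

Definition repetition_number (w : seq bool) (r : nat) : Prop :=
  (exists x, w = wpower x r) /\ (forall x r', w = wpower x r' -> r' <= r).

Fixpoint psi (n a b : nat) (w : seq bool) (v : nat) : seq bond :=
  match w with
  | [::] => [::]
  | s :: w' => (v, s) :: psi n a b w' ((v + step a b s) %% n)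
  end.

From mathcomp Require Import all_boot all_order all_algebra.
From mathcomp Require Import zify.
Set Implicit Arguments. Unset Strict Implicit. Unset Printing Implicit Defensive.

(* Periods of a cyclic sequence form a subgroup of Z, so by maximality of r the
   root x of w = x^r has no proper cyclic period.  Write r = j g and omega = o g
   with g = gcd(r, omega): the walk along x from v first returns to v after
   exactly j copies of x (the displacement of x^h is h omega n / r, a multiple
   of n iff j divides h), so psi(w, v) = Q^g where the walk Q = psi(x^j, v) has
   no proper cyclic period.  If c^t is a rotation of Q^g, the period |c| of Q^g
   is a multiple |c| = u |Q| with t u = g, and c is primitive iff u = 1. *)

Section SeqPower.
Variable T : Type.
Implicit Types s : seq T.

Definition seqpow s m := flatten (nseq m s).

Lemma seqpowS s m : seqpow s m.+1 = s ++ seqpow s m. Proof. by []. Qed.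

Lemma size_seqpow s m : size (seqpow s m) = m * size s.
Proof. by elim: m => //= m IH; rewrite seqpowS size_cat IH mulSn. Qed.

Lemma seqpowD s m q : seqpow s (m + q) = seqpow s m ++ seqpow s q.
Proof. by elim: m => //= m IH; rewrite addSn !seqpowS IH catA. Qed.

Lemma seqpowM s p q : seqpow s (p * q) = seqpow (seqpow s p) q.
Proof. by elim: q => [|q IH]; rewrite ?muln0 // mulnS seqpowD IH. Qed.

Lemma nth_seqpow x0 s m i :
  i < m * size s -> nth x0 (seqpow s m) i = nth x0 s (i %% size s).
Proof.
elim: m i => [|m IH] i //; rewrite mulSn seqpowS nth_cat => lt_i.
case: ltnP => le_s_i; first by rewrite modn_small.
rewrite IH; last by rewrite -(ltn_add2l (size s)) subnKC.
by rewrite -{2}(subnK le_s_i) modnDr.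
Qed.

End SeqPower.

Section CyclicPeriod.
Variables (T : Type) (x0 : T).
Implicit Types s : seq T.

Definition cnth s i := nth x0 s (i %% size s).

Definition cyclic_period s p := forall i, cnth s (i + p) = cnth s i.

Definition primitive_seq s := forall d, 0 < d < size s -> ~ cyclic_period s d.

Lemma cnth_seqpow s m i : 0 < m -> cnth (seqpow s m) i = cnth s i.
Proof.
move=> m_gt0; rewrite /cnth size_seqpow.
have [s0|s_gt0] := posnP (size s).
  by rewrite !nth_default ?size_seqpow ?s0 ?muln0.
rewrite nth_seqpow; last by rewrite ltn_mod muln_gt0 m_gt0.
by rewrite modn_dvdm // dvdn_mull.
Qed.

Lemma cyclic_period_seqpow s m p :
  0 < m -> cyclic_period (seqpow s m) p <-> cyclic_period s p.
Proof. by move=> m_gt0; split=> per i; have := per i; rewrite !cnth_seqpow. Qed.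

Lemma cyclic_period_size s : cyclic_period s (size s).
Proof. by move=> i; rewrite /cnth modnDr. Qed.

Lemma cyclic_periodM s p k : cyclic_period s p -> cyclic_period s (k * p).
Proof.
move=> per; elim: k => [|k IH] i; first by rewrite addn0.
by rewrite mulSn addnA IH per.
Qed.

Lemma cyclic_periodB s p q :
  cyclic_period s p -> cyclic_period s q -> q <= p -> cyclic_period s (p - q).
Proof. by move=> per_p per_q le_qp i; rewrite -per_q -addnA subnK. Qed.

Lemma cyclic_period_gcd s p q :
  cyclic_period s p -> cyclic_period s q -> cyclic_period s (gcdn p q).
Proof.
move=> per_p per_q; have [->|p_gt0] := posnP p; first by rewrite gcd0n.
have [kp kq Ebezout _] := egcdnP q p_gt0.
have -> : gcdn p q = kp * p - kq * q by rewrite Ebezout addKn.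
by apply: cyclic_periodB; [exact: cyclic_periodM.. | rewrite Ebezout leq_addr].
Qed.

Lemma cnth_rot k s i : k < size s -> cnth (rot k s) i = cnth s (i + k).
Proof.
move=> lt_k; rewrite /cnth size_rot.
have s_gt0 : 0 < size s by apply: leq_ltn_trans lt_k.
rewrite /rot nth_cat size_drop nth_drop -modnDml.
have lt_j : i %% size s < size s by rewrite ltn_mod.
move: (i %% size s) lt_j => j lt_j.
case: ltnP => le_j.
  by rewrite addnC modn_small //; lia.
rewrite nth_take; last by lia.
have -> : j + k = j - (size s - k) + size s by lia.
by rewrite modnDr modn_small //; lia.
Qed.

Lemma cyclic_period_rot k s p : cyclic_period (rot k s) p <-> cyclic_period s p.
Proof.
suff rotP j t : cyclic_period t p -> cyclic_period (rot j t) p.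
  by split=> [/(rotP (size (rot k s) - k))|/rotP //]; rewrite -/(rotr k _) rotK.
have [lt_j per i|le_j] := ltnP j (size t); last by rewrite rot_oversize.
by rewrite !cnth_rot // addnAC per.
Qed.

Lemma cyclic_period_rot_seqpow i c m :
  0 < m -> cyclic_period (rot i (seqpow c m)) (size c).
Proof.
by move=> m_gt0; rewrite cyclic_period_rot cyclic_period_seqpow //; apply: cyclic_period_size.
Qed.

Lemma seqpow_take_period s p : 0 < p -> p %| size s ->
  cyclic_period s p -> s = seqpow (take p s) (size s %/ p).
Proof.
move=> p_gt0 dvd_p per.
have [/size0nil ->|s_gt0] := posnP (size s); first by rewrite div0n.
have le_p : p <= size s by apply: dvdn_leq.
have size_take_p : size (take p s) = p by rewrite size_take_min (minn_idPl le_p).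
apply: (@eq_from_nth _ x0) => [|i lt_i]; first by rewrite size_seqpow size_take_p divnK.
rewrite nth_seqpow size_take_p ?divnK // nth_take ?ltn_mod //.
have := cyclic_periodM (i %/ p) per (i %% p).
have lt_ip : i %% p < size s by apply: leq_trans le_p; rewrite ltn_mod.
by rewrite /cnth addnC -divn_eq (modn_small lt_i) (modn_small lt_ip).
Qed.

Lemma primitive_period_dvd s m d : primitive_seq s -> 0 < size s -> 0 < m ->
  cyclic_period (seqpow s m) d -> size s %| d.
Proof.
move=> prim s_gt0 m_gt0 /(cyclic_period_seqpow _ _ m_gt0) per_d.
have per_g := cyclic_period_gcd per_d (cyclic_period_size s).
have g_gt0 : 0 < gcdn d (size s) by rewrite gcdn_gt0 s_gt0 orbT.
suff <- : gcdn d (size s) = size s by apply: dvdn_gcdl.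
apply/eqP; rewrite eqn_leq dvdn_leq ?dvdn_gcdr //= leqNgt.
by apply/negP => lt_g; apply: (prim _ _ per_g); rewrite g_gt0.
Qed.

Lemma primitive_of_maximal_power x r : 0 < r ->
  (forall y r', seqpow x r = seqpow y r' -> r' <= r) -> primitive_seq x.
Proof.
move=> r_gt0 maxr d /andP [d_gt0 lt_d] per_d.
have per_e := cyclic_period_gcd per_d (cyclic_period_size x).
have e_gt0 : 0 < gcdn d (size x) by rewrite gcdn_gt0 d_gt0.
have Ex := seqpow_take_period e_gt0 (dvdn_gcdr _ _) per_e.
have := maxr (take (gcdn d (size x)) x) (size x %/ gcdn d (size x) * r).
rewrite seqpowM -Ex => /(_ erefl); rewrite -{2}[r]mul1n leq_pmul2r // => le_q.
have Ee : gcdn d (size x) = size x.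
  move: le_q (divnK (dvdn_gcdr d (size x))).
  by case: (size x %/ _) => [|[|q]] //; [lia | rewrite mul1n].
by move: (dvdn_leq d_gt0 (dvdn_gcdl d (size x))); rewrite Ee leqNgt lt_d.
Qed.

End CyclicPeriod.

Lemma cyclic_period_map (T U : Type) (x0 : T) (h : T -> U) (s : seq T) p :
  cyclic_period x0 s p -> cyclic_period (h x0) (map h s) p.
Proof.
move=> per i; rewrite /cnth size_map.
have [/size0nil ->|s_gt0] := posnP (size s); first by rewrite !nth_nil.
by rewrite !(nth_map x0) ?ltn_mod //; congr h; apply: per.
Qed.

Lemma ndvdn_before_return n d j o h : 0 < n -> coprime j o ->
  j * d = o * n -> 0 < h < j -> ~~ (n %| h * d).
Proof.
move=> n_gt0 co_jo Ejd /andP [h_gt0 lt_hj]; apply/negP => /dvdnP [c Ehd].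
have : j %| h * o.
  apply/dvdnP; exists c; apply/eqP; rewrite -(eqn_pmul2r n_gt0).
  by rewrite -mulnA -Ejd mulnCA Ehd mulnA [c * j]mulnC.
by rewrite Gauss_dvdl // => /(dvdn_leq h_gt0); rewrite leqNgt lt_hj.
Qed.

Section Walks.
Variables n a b : nat.

Definition displacement (u : seq bool) := sumn (map (step a b) u).

Lemma displacement_cat u1 u2 :
  displacement (u1 ++ u2) = displacement u1 + displacement u2.
Proof. by rewrite /displacement map_cat sumn_cat. Qed.

Lemma displacement_seqpow u m : displacement (seqpow u m) = m * displacement u.
Proof. by elim: m => // m IH; rewrite seqpowS displacement_cat IH mulSn. Qed.

Lemma displacement_count u : a <= b ->
  displacement u = size u * a + count id u * (b - a).
Proof.
move=> le_ab; elim: u => //= s u IH.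
rewrite /displacement /= -/(displacement u) IH /step.
by case: s; rewrite /= ?add1n ?add0n !mulSn; lia.
Qed.

Lemma size_psi u v : size (psi n a b u v) = size u.
Proof. by elim: u v => //= s u IH v; rewrite IH. Qed.

Lemma map_snd_psi u v : map snd (psi n a b u v) = u.
Proof. by elim: u v => //= s u IH v; rewrite IH. Qed.

Hypothesis n_gt0 : 0 < n.

Lemma psi_cat u1 u2 v : v < n ->
  psi n a b (u1 ++ u2) v = psi n a b u1 v ++ psi n a b u2 ((v + displacement u1) %% n).
Proof.
elim: u1 v => [|s u IH] v lt_v /=; first by rewrite addn0 modn_small.
by rewrite IH ?ltn_mod // modnDml addnA.
Qed.

Lemma psi_seqpow u m v : v < n -> (v + displacement u) %% n = v ->
  psi n a b (seqpow u m) v = seqpow (psi n a b u v) m.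
Proof.
by move=> lt_v ret; elim: m => // m IH; rewrite !seqpowS psi_cat // ret IH.
Qed.

Lemma origin_nth_psi u v k : v < n -> k < size u ->
  origin (nth (0, false) (psi n a b u v) k) = (v + displacement (take k u)) %% n.
Proof.
elim: u v k => // s u IH v [|k] lt_v /=; first by rewrite addn0 modn_small.
by move=> lt_k; rewrite IH ?ltn_mod // modnDml addnA.
Qed.

Lemma psi_bonds u v : v < n -> all (is_bond n) (psi n a b u v).
Proof. by elim: u v => //= s u IH v lt_v; rewrite /is_bond lt_v IH ?ltn_mod. Qed.

Lemma psi_path u v e : terminus n a b e = v -> path (consec n a b) e (psi n a b u v).
Proof. by elim: u v e => //= s u IH v e te; rewrite /consec te eqxx IH. Qed.

Lemma terminus_last_psi u v e : u != [::] ->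
  terminus n a b (last e (psi n a b u v)) = (v + displacement u) %% n.
Proof.
elim: u v e => //= s u IH v e _.
case: u IH => [|s' u] IH; first by rewrite /terminus /displacement /= addn0.
by rewrite IH // modnDml -addnA.
Qed.

Lemma psi_circuit u v : v < n -> u != [::] -> (v + displacement u) %% n = v ->
  is_circuit n a b (psi n a b u v).
Proof.
case: u => // s u lt_v _ ret; rewrite /is_circuit psi_bonds //= rcons_path psi_path //=.
by have := @terminus_last_psi (s :: u) v (v, s) isT; rewrite ret /consec => ->.
Qed.

Lemma psi_seqpow_primitive_root x r o v : v < n -> primitive_seq false x -> 0 < r ->
  r * displacement x = o * n ->
  exists2 Q, primitive_seq (0, false) Q & psi n a b (seqpow x r) v = seqpow Q (gcdn r o).
Proof.
move=> lt_v x_prim r_gt0 Er.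
set g := gcdn r o; have g_gt0 : 0 < g by rewrite gcdn_gt0 r_gt0.
have Erj : r = r %/ g * g by rewrite divnK // dvdn_gcdl.
have Eoj : o = o %/ g * g by rewrite divnK // dvdn_gcdr.
set j := r %/ g in Erj *; set o' := o %/ g in Eoj *.
have co_jo : coprime j o'.
  by rewrite /coprime -(eqn_pmul2r g_gt0) muln_gcdl -Erj -Eoj mul1n.
have Ej : j * displacement x = o' * n.
  by apply/eqP; rewrite -(eqn_pmul2r g_gt0) mulnAC -Erj Er Eoj mulnAC.
have ret : (v + displacement (seqpow x j)) %% n = v.
  by rewrite displacement_seqpow Ej addnC modnMDl modn_small.
exists (psi n a b (seqpow x j) v); last by rewrite {1}Erj seqpowM psi_seqpow.
move=> d /andP [d_gt0 lt_d] per_d; rewrite size_psi size_seqpow in lt_d.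
have /andP [j_gt0 x_gt0] : (0 < j) && (0 < size x) by rewrite -muln_gt0 (leq_ltn_trans _ lt_d).
have /dvdnP [h Ed] : size x %| d.
  apply: (primitive_period_dvd x_prim x_gt0 j_gt0).
  by have := cyclic_period_map snd per_d; rewrite map_snd_psi.
have lt_hj : 0 < h < j.
  by rewrite -(ltn_pmul2r x_gt0) mul0n -Ed d_gt0 -(ltn_pmul2r x_gt0) -Ed.
have := congr1 origin (per_d 0).
rewrite /cnth add0n mod0n size_psi size_seqpow modn_small //.
rewrite !origin_nth_psi ?size_seqpow ?muln_gt0 ?j_gt0 ?x_gt0 //.
rewrite -(subnKC (ltnW (proj2 (andP lt_hj)))) seqpowD Ed take_size_cat ?size_seqpow //.
move/eqP; rewrite take0 (eqn_modDl v _ 0) mod0n displacement_seqpow -/(dvdn _ _).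
by rewrite (negPf (ndvdn_before_return n_gt0 co_jo Ej lt_hj)).
Qed.

End Walks.

Section Orbits.
Variables n a b : nat.

Lemma circuit_size_gt0 c : is_circuit n a b c -> 0 < size c.
Proof. by case/and3P; rewrite lt0n size_eq0. Qed.

Lemma circuit_seqpow_root c m : 0 < m -> is_circuit n a b (seqpow c m) -> is_circuit n a b c.
Proof.
case: m => // m _; case: c => [|e c]; first by rewrite /is_circuit -size_eq0 size_seqpow muln0.
case/and3P => _; rewrite seqpowS all_cat => /andP [bonds _].
rewrite /is_circuit bonds /= rcons_cat cat_path rcons_path => /and3P [pc prest plast].
by rewrite rcons_path pc; case: m prest plast => [|m] //= /andP [].
Qed.

Lemma primitive_orbit_root Q g c t :
  primitive_seq (0, false) Q -> is_circuit n a b c -> 0 < t ->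
  same_orbit (cpower c t) (seqpow Q g) -> primitive_orbit n a b c <-> t = g.
Proof.
move=> Q_prim c_circ t_gt0 [i EQ]; rewrite /cpower -/(seqpow c t) in EQ.
have c_gt0 := circuit_size_gt0 c_circ.
have Esize : g * size Q = t * size c by rewrite -size_seqpow EQ size_rot size_seqpow.
have /andP [g_gt0 Q_gt0] : (0 < g) && (0 < size Q) by rewrite -muln_gt0 Esize muln_gt0 t_gt0.
have Q_dvd_period d : cyclic_period (0, false) c d -> size Q %| d.
  move=> per_d; apply: (primitive_period_dvd Q_prim Q_gt0 g_gt0).
  by rewrite EQ cyclic_period_rot cyclic_period_seqpow.
have /dvdnP [u Ec] := Q_dvd_period _ (cyclic_period_size _ c).
have Eg : g = t * u by apply/eqP; rewrite -(eqn_pmul2r Q_gt0) Esize Ec mulnA.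
have u_gt0 : 0 < u by move: c_gt0; rewrite Ec muln_gt0 => /andP [].
split=> [c_prim | Etg].
  rewrite Eg; suff -> : u = 1 by rewrite muln1.
  apply/eqP; rewrite eqn_leq u_gt0 andbT leqNgt; apply/negP => u_gt1; apply: c_prim.
  have per_Q : cyclic_period (0, false) c (size Q).
    rewrite -(cyclic_period_seqpow _ _ _ t_gt0) -(cyclic_period_rot _ i) -EQ.
    by rewrite cyclic_period_seqpow //; apply: cyclic_period_size.
  have Ec_root := seqpow_take_period Q_gt0 (Q_dvd_period _ (cyclic_period_size _ c)) per_Q.
  rewrite Ec mulnK // in Ec_root.
  exists (take (size Q) c), u; split => //; last by exists 0; rewrite rot0 {1}Ec_root.
  by apply: (circuit_seqpow_root u_gt0); rewrite -Ec_root.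
case=> c0 [s [c0_circ s_gt1 [i0 Ec0]]].
have c0_gt0 := circuit_size_gt0 c0_circ.
have : size Q %| size c0.
  by rewrite Ec0 in Q_dvd_period; exact/Q_dvd_period/cyclic_period_rot_seqpow/ltnW.
have -> : size Q = s * size c0.
  rewrite Ec0 size_rot size_seqpow in Ec.
  have u1 : u = 1 by apply/eqP; rewrite -(eqn_pmul2l t_gt0) muln1 -Eg Etg.
  by rewrite Ec u1 mul1n.
by move/(dvdn_leq c0_gt0); rewrite leqNgt ltn_Pmull.
Qed.

End Orbits.

Import GRing.Theory Num.Theory.
Local Open Scope ring_scope.

Theorem mainTheorem12 (n a b : nat) (l k : nat) (omega : int)
    (w x : seq bool) (r : nat) (v : nat) :
  (2 <= n)%N -> (0 < a)%N -> (a < b)%N -> (b < n)%N ->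
  gcdn n (gcdn a b) = 1%N ->
  (1 <= l)%N -> (k <= l)%N ->
  (l%:Z * a%:Z + k%:Z * (b%:Z - a%:Z) = omega * n%:Z) ->
  size w = l -> count id w = k ->
  w = wpower x r -> repetition_number w r ->
  (v < n)%N ->
  (primitive_orbit n a b (psi n a b w v) <-> gcdz r%:Z omega = 1)
  /\
  (forall (c : seq bond) (t : nat),
     is_circuit n a b c -> (0 < t)%N ->
     same_orbit (cpower c t) (psi n a b w v) ->
     (primitive_orbit n a b c <-> t%:Z = gcdz r%:Z omega)).
Proof.
move=> n_ge2 _ lt_ab _ _ l_gt0 _ Esum sw cw Ew [_ max_r] lt_v.
have n_gt0 : (0 < n)%N by apply: leq_trans n_ge2.
have [o -> Edisp] : exists2 o : nat, omega = o & (l * a + k * (b - a) = o * n)%N.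
  by case: omega Esum => o Esum; [exists o => //; nia | exfalso; nia].
rewrite /wpower -/(seqpow x r) in Ew max_r.
have Edisp_w : displacement a b w = (o * n)%N.
  by rewrite displacement_count ?(ltnW lt_ab) // sw cw Edisp.
have r_gt0 : (0 < r)%N by move: l_gt0; rewrite -sw Ew size_seqpow muln_gt0 => /andP [].
have x_prim : primitive_seq false x.
  by apply: (primitive_of_maximal_power r_gt0) => y r' E; apply: max_r; rewrite Ew E.
have [Q Q_prim EQ] : exists2 Q, primitive_seq (0%N, false) Q & psi n a b w v = seqpow Q (gcdn r o).
  by rewrite Ew; apply: psi_seqpow_primitive_root; rewrite // -displacement_seqpow -Ew.
have w_circ : is_circuit n a b (psi n a b w v).
  apply: psi_circuit => //; first by rewrite -size_eq0 sw -lt0n.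
  by rewrite Edisp_w addnC modnMDl modn_small.
have Posz_eq (p q : nat) : (p%:Z = q%:Z) <-> p = q by split=> [[]|->].
rewrite /gcdz /=; split=> [|c t c_circ t_gt0]; rewrite Posz_eq.
  rewrite (primitive_orbit_root (t := 1) (g := gcdn r o) Q_prim w_circ) //.
    by split=> /esym.
  by exists 0%N; rewrite rot0 /cpower /= cats0 EQ.
by rewrite EQ; apply: primitive_orbit_root.
Qed.
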